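(* Let $A$ be a system of $n_A$ qubits and $B$ a system of $n_B$ qubits. Let $\mathcal{P}$ be a CPTP map from operators on $H_{A_1}\otimes H_{B_1}$ (the systems at time $t_1$) to operators on $H_{A_2}\otimes H_{B_2}$ (the systems at time $t_2$) that does not allow signalling from $B$ to $A$, i.e. there exists a completely positive map $\mathcal{T}$ from operators on $H_{A_1}$ to operators on $H_{A_2}$ with $\mathrm{Tr}_{B_2}\mathcal{P}(\rho_{A_1B_1})=\mathcal{T}(\mathrm{Tr}_{B_1}\rho_{A_1B_1})$ for all states $\rho_{A_1B_1}$. Then for every state $\rho_{A_1B_1}$ at time $t_1$, the pseudo-density matrix $R_{B_1A_2}$ (defined in the context) is positive semidefinite, and $f(R_{B_1A_2})=0$.
   Context: Pauli matrices $\sigma_0=\mathbb{1},\sigma_1,\sigma_2,\sigma_3$; multi-qubit Pauli matrices are tensor products of these. The coarse-grained measurement of a Pauli matrix $\Sigma$ on the full system $AB$ is the projective measurement $\{(\mathbb{1}\pm\Sigma)/2\}$ with outcomes $\pm1$ and Lüders update $\rho\mapsto P_\pm\rho P_\pm$. For an $n_B$-qubit Pauli $\tilde\sigma_j$ and an $n_A$-qubit Pauli $\tilde\sigma_k$, consider the experiment: prepare $\rho_{A_1B_1}$; at $t_1$ perform the coarse-grained measurement of $\mathbb{1}_A\otimes\tilde\sigma_j$; apply $\mathcal{P}$ to the post-measurement state; at $t_2$ perform the coarse-grained measurement of $\tilde\sigma_k\otimes\mathbb{1}_B$. Let $\langle\tilde\sigma_j^{B_1},\tilde\sigma_k^{A_2}\rangle$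 be the expectation of the product of the two outcomes. The pseudo-density matrix is $R_{B_1A_2}=2^{-(n_A+n_B)}\sum_{j=0}^{4^{n_B}-1}\sum_{k=0}^{4^{n_A}-1}\langle\tilde\sigma_j^{B_1},\tilde\sigma_k^{A_2}\rangle\,\tilde\sigma_j\otimes\tilde\sigma_k$ (equivalently, the partial trace over $A_1B_2$ of the two-time pseudo-density matrix of the full system $AB$). The PDM negativity (causal monotone) is $f(R)=\|R\|_{tr}-1=\mathrm{Tr}\sqrt{RR^\dagger}-1$. *)

From HB Require Import structures.
From mathcomp Require Import all_boot all_order all_algebra.
From mathcomp Require Import mxtens.
From Stdlib Require Import ClassicalEpsilon.
Set Implicit Arguments. Unset Strict Implicit. Unset Printing Implicit Defensive.
Import Order.TTheory GRing.Theory Num.Theory.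
Local Open Scope ring_scope.

Section QDefs.
Variable C : numClosedFieldType.

Definition adjmx {m n} (M : 'M[C]_(m, n)) : 'M[C]_(n, m) := (map_mx Num.conj M)^T.

Definition psd {n} (M : 'M[C]_n) : Prop :=
  adjmx M = M /\ forall v : 'cV[C]_n, 0 <= (adjmx v *m M *m v) 0 0.

Definition is_state {n} (rho : 'M[C]_n) : Prop := psd rho /\ \tr rho = 1.

(* the (unique) PSD square root, chosen classically *)
Definition sqrtm {n} (M : 'M[C]_n) : 'M[C]_n :=
  epsilon (inhabits 0) (fun S => psd S /\ S *m S = M).

Definition trnorm {n} (R : 'M[C]_n) : C := \tr (sqrtm (R *m adjmx R)).
Definition pdm_negativity {n} (R : 'M[C]_n) : C := trnorm R - 1.

Definition ptrace2 {m n} (M : 'M[C]_(m * n)) : 'M[C]_m :=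
  \matrix_(i, j) \sum_(k < n) M (mxtens_index (i, k)) (mxtens_index (j, k)).

(* ampliation id_k (x) Phi *)
Definition ampl (k : nat) {m n} (Phi : 'M[C]_m -> 'M[C]_n) (M : 'M[C]_(k * m))
  : 'M[C]_(k * n) :=
  \matrix_(I, J)
    Phi (\matrix_(x, y) M (mxtens_index ((mxtens_unindex I).1, x))
                          (mxtens_index ((mxtens_unindex J).1, y)))
        (mxtens_unindex I).2 (mxtens_unindex J).2.

Definition completely_positive {m n} (Phi : 'M[C]_m -> 'M[C]_n) : Prop :=
  forall (k : nat) (M : 'M[C]_(k * m)), psd M -> psd (@ampl k m n Phi M).

Definition trace_preserving {m n} (Phi : 'M[C]_m -> 'M[C]_n) : Prop :=
  forall M : 'M[C]_m, \tr (Phi M) = \tr M.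

Definition sigma (a : 'I_4) : 'M[C]_2 :=
  match val a with
  | 0 => 1%:M
  | 1 => \matrix_(i, j) (if i == j then 0 else 1)
  | 2 => \matrix_(i, j) (if i == j then 0 else if (i : nat) == 0 then - 'i else 'i)
  | _ => \matrix_(i, j) (if i == j then (if (i : nat) == 0 then 1 else -1) else 0)
  end.

Fixpoint pauliN (n : nat) : (nat -> 'I_4) -> 'M[C]_(2 ^ n) :=
  match n return (nat -> 'I_4) -> 'M[C]_(2 ^ n) with
  | 0 => fun _ => 1%:M
  | n'.+1 => fun f =>
      castmx (esym (expnS 2 n'), esym (expnS 2 n'))
        (sigma (f 0) *t pauliN n' (fun k => f k.+1))
  end.

Definition pauli {n} (t : n.-tuple 'I_4) : 'M[C]_(2 ^ n) :=
  pauliN n (fun k => nth ord0 t k).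

(* projector (1 + (-1)^s Sigma)/2 of the coarse-grained measurement of Sigma,
   outcome (-1)^s *)
Definition proj_out {d} (s : bool) (S : 'M[C]_d) : 'M[C]_d :=
  (2%:R)^-1 *: (1%:M + ((-1) ^+ s) *: S).

(* <Sigma1 at t1, Sigma2 at t2>: expectation of the product of outcomes when
   Sigma1 is measured (Lueders update), then P applied, then Sigma2 measured *)
Definition two_time_corr {d} (P : 'M[C]_d -> 'M[C]_d) (rho S1 S2 : 'M[C]_d) : C :=
  \sum_(a : bool) \sum_(b : bool)
     ((-1) ^+ a * (-1) ^+ b) *
     \tr (proj_out b S2 *m P (proj_out a S1 *m rho *m proj_out a S1)).

(* pseudo-density matrix R_{B1 A2} (ordering B (x) A) *)
Definition pdm_B1A2 (nA nB : nat) (P : 'M[C]_(2 ^ nA * 2 ^ nB) -> 'M[C]_(2 ^ nA * 2 ^ nB))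
  (rho : 'M[C]_(2 ^ nA * 2 ^ nB)) : 'M[C]_(2 ^ nB * 2 ^ nA) :=
  ((2%:R) ^+ (nA + nB))^-1 *:
    \sum_(j : nB.-tuple 'I_4) \sum_(k : nA.-tuple 'I_4)
      two_time_corr P rho (1%:M *t pauli j) (pauli k *t 1%:M) *: (pauli j *t pauli k).

End QDefs.

(* No signalling from B to A turns each two-time correlation into
   [tr (sigma_k T (Tr_B ((1 (x) sigma_j) rho)))], and completeness of the Pauli
   basis reassembles R_{B1A2} into (id_B (x) T) applied to rho with its tensor
   factors swapped.  Complete positivity of T makes R positive semidefinite, so
   its trace norm is its trace, and tr R = tr T (Tr_B rho) = tr Tr_B P(rho) =
   tr rho = 1. *)

From HB Require Import structures.
From mathcomp Require Import all_boot all_order all_algebra.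
From mathcomp Require Import mxtens ring.
From Stdlib Require Import ClassicalEpsilon.
Set Implicit Arguments. Unset Strict Implicit. Unset Printing Implicit Defensive.
Import Order.TTheory GRing.Theory Num.Theory.
Local Open Scope ring_scope.

Section Psd.
Variable C : numClosedFieldType.

Lemma adjmxE m n (A : 'M[C]_(m, n)) i j : adjmx A i j = (A j i)^*.
Proof. by rewrite !mxE. Qed.

Lemma adjmxK m n (A : 'M[C]_(m, n)) : adjmx (adjmx A) = A.
Proof. by apply/matrixP => i j; rewrite !adjmxE conjCK. Qed.

Lemma adjmxM m n p (A : 'M[C]_(m, n)) (B : 'M[C]_(n, p)) :
  adjmx (A *m B) = adjmx B *m adjmx A.
Proof. by rewrite /adjmx map_mxM trmx_mul. Qed.

Lemma adjmxD m n (A B : 'M[C]_(m, n)) : adjmx (A + B) = adjmx A + adjmx B.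
Proof. by apply/matrixP => i j; rewrite !mxE rmorphD. Qed.

Lemma adjmxN m n (A : 'M[C]_(m, n)) : adjmx (- A) = - adjmx A.
Proof. by apply/matrixP => i j; rewrite !mxE rmorphN. Qed.

Lemma adjmxZ m n a (A : 'M[C]_(m, n)) : adjmx (a *: A) = a^* *: adjmx A.
Proof. by apply/matrixP => i j; rewrite !mxE rmorphM. Qed.

Lemma adjmx1 n : adjmx (1%:M : 'M[C]_n) = 1%:M.
Proof. by apply/matrixP => i j; rewrite !mxE eq_sym rmorph_nat. Qed.

Lemma adjmx_tens m n p q (A : 'M[C]_(m, n)) (B : 'M[C]_(p, q)) :
  adjmx (A *t B) = adjmx A *t adjmx B.
Proof. by apply/matrixP => i j; rewrite !mxE rmorphM. Qed.

Lemma adjmx_mul_self_ge0 n (w : 'cV[C]_n) : 0 <= (adjmx w *m w) 0 0.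
Proof.
rewrite mxE; apply: sumr_ge0 => i _; rewrite !mxE mulrC; exact: mul_conjC_ge0.
Qed.

Lemma adjmx_mul_self_eq0 n (w : 'cV[C]_n) : (adjmx w *m w) 0 0 = 0 -> w = 0.
Proof.
have ge0 k : 0 <= adjmx w 0 k * w k 0 by rewrite !mxE mulrC; exact: mul_conjC_ge0.
rewrite mxE => /(psumr_eq0P (fun k _ => ge0 k)) w0.
apply/matrixP => i j; rewrite (ord1 j) mxE; apply/eqP.
by rewrite -mul_conjC_eq0 mulrC -[_^*]adjmxE w0.
Qed.

Lemma psd1 n : psd (1%:M : 'M[C]_n).
Proof. by split=> [|v]; rewrite ?adjmx1 // mulmx1 adjmx_mul_self_ge0. Qed.

Lemma psdD n (S R : 'M[C]_n) : psd S -> psd R -> psd (S + R).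
Proof.
move=> [hS pS] [hR pR]; split=> [|v]; first by rewrite adjmxD hS hR.
by rewrite mulmxDr mulmxDl mxE addr_ge0.
Qed.

Lemma psdZ n a (S : 'M[C]_n) : 0 <= a -> psd S -> psd (a *: S).
Proof.
move=> a0 [hS pS]; split=> [|v]; first by rewrite adjmxZ hS conj_Creal ?ger0_real.
by rewrite -scalemxAr -scalemxAl mxE mulr_ge0.
Qed.

Lemma psd_congr n (Q A : 'M[C]_n) : psd Q -> psd (adjmx A *m Q *m A).
Proof.
move=> [hQ pQ]; split=> [|v]; first by rewrite !adjmxM adjmxK hQ mulmxA.
by have := pQ (A *m v); rewrite adjmxM !mulmxA.
Qed.

Lemma psd_reindex n m (f : 'I_n -> 'I_m) (Q : 'M[C]_m) :
  bijective f -> psd Q -> psd (\matrix_(i, j) Q (f i) (f j)).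
Proof.
move=> [g fK gK] [hQ pQ]; split=> [|v].
  by apply/matrixP => i j; rewrite !mxE -[in RHS]hQ !mxE.
set w := \col_i v (g i) 0.
suff -> : (adjmx v *m \matrix_(i, j) Q (f i) (f j) *m v) 0 0 = (adjmx w *m Q *m w) 0 0.
  exact: pQ.
rewrite !mxE (reindex g) /=; last by exists f => i _.
apply: eq_bigr => j _; rewrite !mxE; congr (_ * _).
rewrite (reindex g) /=; last by exists f => i _.
by apply: eq_bigr => i _; rewrite !mxE !gK.
Qed.

Lemma psd_form_eq0 n (Q : 'M[C]_n) (u : 'cV[C]_n) :
  psd Q -> (adjmx u *m Q *m u) 0 0 = 0 -> Q *m u = 0.
Proof.
move=> [hQ pQ] u0; set w := Q *m u; apply: adjmx_mul_self_eq0.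
set a := (adjmx w *m w) 0 0; set b := (adjmx w *m Q *m w) 0 0.
have a0 : 0 <= a := adjmx_mul_self_ge0 w.
have b0 : 0 <= b := pQ w.
have b1 : 0 < b + 1 by rewrite ltr_wpDl.
(* the form at [u + t w] is [2 t a + t^2 b], negative for [t = - a / (b + 1)] unless [a = 0] *)
set t := - (a / (b + 1)).
have tR : t^* = t by apply: conj_Creal; rewrite realN realM ?realV ?ger0_real ?(ltW b1).
have uQ : adjmx u *m Q = adjmx w by rewrite adjmxM hQ.
have mxDE (A B : 'M[C]_1) : (A + B) 0 0 = A 0 0 + B 0 0 by rewrite mxE.
have mxZE c (A : 'M[C]_1) : (c *: A) 0 0 = c * A 0 0 by rewrite mxE.
have := pQ (u + t *: w).
rewrite adjmxD adjmxZ tR !mulmxDl !mulmxDr -!scalemxAl -!scalemxAr scalerA.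
rewrite -[adjmx w *m Q *m u]mulmxA -/w !mxDE !mxZE u0 uQ -/a -/b.
have -> : 0 + t * a + (t * a + t * t * b) = - (a ^+ 2 * (b + 2%:R) / (b + 1) ^+ 2).
  by rewrite /t; field; rewrite gt_eqF.
rewrite oppr_ge0 => le0.
have : a ^+ 2 * (b + 2%:R) / (b + 1) ^+ 2 == 0.
  by rewrite eq_le le0 divr_ge0 ?mulr_ge0 ?exprn_ge0 ?addr_ge0 // ltW.
have b2 : 0 < b + 2%:R by rewrite ltr_wpDl.
by rewrite !mulf_eq0 invr_eq0 !expf_eq0 /= orbb (gt_eqF b1) (gt_eqF b2) !orbF => /eqP.
Qed.

Lemma mxtrace_congr_col n (Q A : 'M[C]_n) :
  \tr (adjmx A *m Q *m A) = \sum_i (adjmx (col i A) *m Q *m col i A) 0 0.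
Proof.
apply: eq_bigr => i _; rewrite !mxE; apply: eq_bigr => k _.
by rewrite !mxE; congr (_ * _); apply: eq_bigr => l _; rewrite !mxE.
Qed.

Lemma psd_mxtrace_congr_ge0 n (Q A : 'M[C]_n) : psd Q -> 0 <= \tr (adjmx A *m Q *m A).
Proof. by move=> [_ pQ]; rewrite mxtrace_congr_col sumr_ge0. Qed.

Lemma psd_mxtrace_congr_eq0 n (Q A : 'M[C]_n) :
  psd Q -> \tr (adjmx A *m Q *m A) = 0 -> Q *m A = 0.
Proof.
move=> pQ; rewrite mxtrace_congr_col => /(psumr_eq0P (fun i _ => pQ.2 (col i A))) A0.
apply/matrixP => k i; have := psd_form_eq0 pQ (A0 i isT).
by rewrite colE mulmxA -colE => /matrixP/(_ k 0); rewrite !mxE.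
Qed.

(* [X = S - R] anticommutes with [Y = S + R]; cyclicity of the trace then gives
   [tr (X Y X) = 0], hence [Y X = 0], and positivity splits this into [S X = R X = 0]. *)
Lemma psd_sqr_inj n (S R : 'M[C]_n) : psd S -> psd R -> S *m S = R *m R -> S = R.
Proof.
move=> pS pR SR; set X := S - R; set Y := S + R.
have hX : adjmx X = X by rewrite adjmxD adjmxN pS.1 pR.1.
have XY : X *m Y = - (Y *m X).
  apply/eqP; rewrite -subr_eq0 opprK mulmxBl mulmxDl !mulmxDr !mulmxN SR.
  by rewrite (addrC (R *m R)) (addrC (R *m S)) addrKA (addrC (_ - S *m R)) subrKA subrKA subrr.
have tr0 : \tr (adjmx X *m Y *m X) = 0.
  apply/eqP; rewrite hX -[_ == 0](mulrn_eq0 _ 2) mulr2n.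
  by rewrite {1}XY (mulNmx (Y *m X)) linearN /= (mxtrace_mulC (Y *m X)) mulmxA addNr.
have YX : Y *m X = 0 := psd_mxtrace_congr_eq0 (psdD pS pR) tr0.
have /eqP : \tr (adjmx X *m S *m X) + \tr (adjmx X *m R *m X) = 0.
  by rewrite -mxtraceD -mulmxDl -mulmxDr -mulmxA YX mulmx0 mxtrace0.
rewrite paddr_eq0 ?psd_mxtrace_congr_ge0 // => /andP[/eqP/(psd_mxtrace_congr_eq0 pS) SX].
move=> /eqP/(psd_mxtrace_congr_eq0 pR) RX; apply/eqP; rewrite -subr_eq0 -/X.
have : \tr (adjmx X *m 1%:M *m X) = 0 by rewrite mulmx1 hX {1}/X mulmxBl SX RX subrr mxtrace0.
by move/(psd_mxtrace_congr_eq0 (psd1 n)); rewrite mul1mx => ->.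
Qed.

Lemma sqrtm_sqr n (R : 'M[C]_n) : psd R -> sqrtm (R *m R) = R.
Proof.
move=> pR; have [] : psd (sqrtm (R *m R)) /\ sqrtm (R *m R) *m sqrtm (R *m R) = R *m R.
  by apply: (epsilon_spec (inhabits 0) (fun S => psd S /\ S *m S = R *m R)); exists R.
by move=> pS /psd_sqr_inj; apply.
Qed.

Lemma trnorm_psd n (R : 'M[C]_n) : psd R -> trnorm R = \tr R.
Proof. by move=> pR; rewrite /trnorm pR.1 sqrtm_sqr. Qed.

(* [X + rho0], renormalised by its trace, is a state. *)
Lemma linear_psd_eq m k (F G : {linear 'M[C]_m -> 'M[C]_k}) (rho0 : 'M[C]_m) :
  is_state rho0 -> (forall rho, is_state rho -> F rho = G rho) ->
  forall X, psd X -> F X = G X.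
Proof.
move=> s0 FG X pX.
have trX : 0 <= \tr X by have := psd_mxtrace_congr_ge0 1%:M pX; rewrite adjmx1 mulmx1 mul1mx.
have c0 : 0 < \tr X + 1 by rewrite ltr_wpDl.
have sY : is_state ((\tr X + 1)^-1 *: (X + rho0)).
  split; first by apply: psdZ; [rewrite invr_ge0 ltW | exact: psdD pX s0.1].
  by rewrite mxtraceZ mxtraceD s0.2 mulVf ?gt_eqF.
have := FG _ sY; rewrite !linearZ !linearD /= (FG _ s0).
by move/(scalerI (invr_neq0 (lt0r_neq0 c0)))/addIr.
Qed.

End Psd.

Section PartialTrace.
Variable C : numClosedFieldType.

Lemma big_mxtens_index m n (F : 'I_(m * n) -> C) :
  \sum_I F I = \sum_(i < m) \sum_(j < n) F (mxtens_index (i, j)).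
Proof.
transitivity (\sum_(p : 'I_m * 'I_n) F (mxtens_index p)).
  by rewrite (reindex (@mxtens_index m n)) //=; exists (@mxtens_unindex m n) => i _;
     rewrite (mxtens_indexK, mxtens_unindexK).
by rewrite pair_big; apply: eq_bigr => -[].
Qed.

Fact ptrace2_is_linear m n : linear (@ptrace2 C m n).
Proof.
move=> a A B; apply/matrixP => i j; rewrite !mxE mulr_sumr -big_split.
by apply: eq_bigr => k _; rewrite !mxE.
Qed.

HB.instance Definition _ m n :=
  GRing.isLinear.Build C 'M[C]_(m * n) 'M[C]_m _ (@ptrace2 C m n) (@ptrace2_is_linear m n).

Lemma mxtrace_ptrace2 m n (A : 'M[C]_(m * n)) : \tr (ptrace2 A) = \tr A.
Proof. by rewrite /mxtrace big_mxtens_index; apply: eq_bigr => i _; rewrite mxE. Qed.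

Definition tens_block m n (A : 'M[C]_(m * n)) (i j : 'I_m) : 'M[C]_n :=
  \matrix_(k, l) A (mxtens_index (i, k)) (mxtens_index (j, l)).

Lemma ptrace2E m n (A : 'M[C]_(m * n)) i j : ptrace2 A i j = \tr (tens_block A i j).
Proof. by rewrite mxE; apply: eq_bigr => k _; rewrite mxE. Qed.

Lemma tens_block_tens1_mul m n (Q : 'M[C]_n) (A : 'M[C]_(m * n)) i j :
  tens_block ((1%:M *t Q) *m A) i j = Q *m tens_block A i j.
Proof.
apply/matrixP => k l; rewrite !mxE big_mxtens_index (bigD1 i) //= [X in _ + X]big1 ?addr0.
  by apply: eq_bigr => k' _; rewrite tensmxE !mxE eqxx mul1r.
by move=> i' /negbTE ne; apply: big1 => k' _; rewrite tensmxE mxE eq_sym ne !mul0r.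
Qed.

Lemma tens_block_mul_tens1 m n (Q : 'M[C]_n) (A : 'M[C]_(m * n)) i j :
  tens_block (A *m (1%:M *t Q)) i j = tens_block A i j *m Q.
Proof.
apply/matrixP => k l; rewrite !mxE big_mxtens_index (bigD1 j) //= [X in _ + X]big1 ?addr0.
  by apply: eq_bigr => k' _; rewrite tensmxE !mxE eqxx mul1r.
by move=> j' /negbTE ne; apply: big1 => k' _; rewrite tensmxE mxE ne mul0r mulr0.
Qed.

Lemma ptrace2_tens1_mulC m n (Q : 'M[C]_n) (A : 'M[C]_(m * n)) :
  ptrace2 ((1%:M *t Q) *m A) = ptrace2 (A *m (1%:M *t Q)).
Proof.
apply/matrixP => i j.
by rewrite !ptrace2E tens_block_tens1_mul tens_block_mul_tens1 mxtrace_mulC.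
Qed.

Lemma mxtrace_tens1_mul m n (M : 'M[C]_m) (A : 'M[C]_(m * n)) :
  \tr ((M *t 1%:M) *m A) = \tr (M *m ptrace2 A).
Proof.
rewrite /mxtrace big_mxtens_index; apply: eq_bigr => i _.
transitivity (\sum_(k < n) \sum_(i' < m) M i i' * A (mxtens_index (i', k)) (mxtens_index (i, k))).
  apply: eq_bigr => k _; rewrite mxE big_mxtens_index; apply: eq_bigr => i' _.
  rewrite (bigD1 k) //= [X in _ + X]big1 ?addr0; first by rewrite tensmxE mxE eqxx mulr1.
  by move=> k' /negbTE ne; rewrite tensmxE mxE eq_sym ne mulr0 mul0r.
by rewrite mxE exchange_big; apply: eq_bigr => i' _; rewrite mxE mulr_sumr.
Qed.

Definition tens_swap_index m n (I : 'I_(m * n)) : 'I_(n * m) :=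
  mxtens_index ((mxtens_unindex I).2, (mxtens_unindex I).1).

Lemma tens_swap_indexK m n : cancel (@tens_swap_index m n) (@tens_swap_index n m).
Proof.
move=> I; rewrite /tens_swap_index mxtens_indexK /= -[in RHS](mxtens_unindexK I).
by congr mxtens_index; case: (mxtens_unindex I).
Qed.

Definition mxswap m n (A : 'M[C]_(m * n)) : 'M[C]_(n * m) :=
  \matrix_(I, J) A (tens_swap_index I) (tens_swap_index J).

Lemma psd_mxswap m n (A : 'M[C]_(m * n)) : psd A -> psd (mxswap A).
Proof. by apply: psd_reindex; exists (@tens_swap_index m n); apply: tens_swap_indexK. Qed.

Lemma tens_block_mxswap m n (A : 'M[C]_(m * n)) j j' i i' :
  tens_block (mxswap A) j j' i i' = A (mxtens_index (i, j)) (mxtens_index (i', j')).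
Proof. by rewrite !mxE /tens_swap_index !mxtens_indexK. Qed.

Lemma sum_tens_block_mxswap m n (A : 'M[C]_(m * n)) :
  \sum_j tens_block (mxswap A) j j = ptrace2 A.
Proof.
by apply/matrixP => i i'; rewrite summxE mxE; apply: eq_bigr => j _; rewrite tens_block_mxswap.
Qed.

Lemma amplE k m n (Phi : 'M[C]_m -> 'M[C]_n) (M : 'M[C]_(k * m)) i j x y :
  ampl Phi M (mxtens_index (i, x)) (mxtens_index (j, y)) = Phi (tens_block M i j) x y.
Proof. by rewrite mxE !mxtens_indexK. Qed.

Lemma mxtrace_ampl k m n (Phi : {linear 'M[C]_m -> 'M[C]_n}) (M : 'M[C]_(k * m)) :
  \tr (ampl Phi M) = \tr (Phi (\sum_i tens_block M i i)).
Proof.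
rewrite raddf_sum /mxtrace big_mxtens_index exchange_big /=.
by apply: eq_bigr => x _; rewrite summxE; apply: eq_bigr => i _; rewrite amplE.
Qed.

End PartialTrace.

Section Pauli.
Variable C : numClosedFieldType.

Lemma sigma_complete (a b c d : 'I_2) :
  \sum_(s < 4) sigma C s a b * sigma C s c d = 2%:R * ((a == d) && (b == c))%:R.
Proof.
rewrite !big_ord_recr big_ord0 /= add0r.
case: a => [[|[|]]] //; case: b => [[|[|]]] //; case: c => [[|[|]]] //;
  case: d => [[|[|]]] // *; rewrite /sigma /= !mxE /=.
all: rewrite ?mulrNN ?mulNr ?mulrN -?expr2 ?sqrCi; ring.
Qed.

Lemma sigma_adj (s : 'I_4) (a b : 'I_2) : (sigma C s b a)^* = sigma C s a b.
Proof.
case: s => [[|[|[|[|]]]]] // ?; case: a => [[|[|]]] //; case: b => [[|[|]]] // *;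
  rewrite /sigma /= !mxE /= ?rmorphN ?conjCi ?opprK ?rmorph1 ?rmorph0 ?rmorphN1 //.
by rewrite -[RHS]opprK; congr (- _); exact: conjCi.
Qed.

Lemma ord_expS_tensP n (a : 'I_(2 ^ n.+1)) :
  exists a1 a2, a = cast_ord (esym (expnS 2 n)) (mxtens_index (a1, a2)).
Proof.
set u := mxtens_unindex (cast_ord (expnS 2 n) a); exists u.1, u.2.
by rewrite -surjective_pairing mxtens_unindexK; apply: val_inj.
Qed.

Lemma eq_cast_mxtens_index n (a1 d1 : 'I_2) (a2 d2 : 'I_(2 ^ n)) :
  (cast_ord (esym (expnS 2 n)) (mxtens_index (a1, a2)) ==
   cast_ord (esym (expnS 2 n)) (mxtens_index (d1, d2))) = (a1 == d1) && (a2 == d2).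
Proof.
by rewrite (inj_eq (@cast_ord_inj _ _ _)) (inj_eq (can_inj (@mxtens_indexK _ _))).
Qed.

Lemma pauli_consE n (x : 'I_4) (t : n.-tuple 'I_4) a1 a2 b1 b2 :
  pauli C (cons_tuple x t) (cast_ord (esym (expnS 2 n)) (mxtens_index (a1, a2)))
     (cast_ord (esym (expnS 2 n)) (mxtens_index (b1, b2)))
  = sigma C x a1 b1 * pauli C t a2 b2.
Proof.
have -> : pauli C (cons_tuple x t) =
    castmx (esym (expnS 2 n), esym (expnS 2 n)) (sigma C x *t pauli C t) by [].
by rewrite castmxE !cast_ordK tensmxE.
Qed.

Lemma big_tuple_cons (T : finType) n (F : n.+1.-tuple T -> C) :
  \sum_(t : n.+1.-tuple T) F t = \sum_(x : T) \sum_(t : n.-tuple T) F (cons_tuple x t).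
Proof.
rewrite pair_big /= (reindex (fun p : T * n.-tuple T => cons_tuple p.1 p.2)) //=.
exists (fun t : n.+1.-tuple T => (thead t, behead_tuple t)).
  by move=> [x t] _ /=; congr (_, _); apply: val_inj.
by move=> t _; apply: val_inj; rewrite /= [in RHS](tuple_eta t).
Qed.

Lemma ord_expn0 (z : 'I_(2 ^ 0)) : z = ord0.
Proof. by apply: val_inj; case: z => [[|]]. Qed.

Lemma pauli_complete n (a b c d : 'I_(2 ^ n)) :
  \sum_(t : n.-tuple 'I_4) pauli C t a b * pauli C t c d
  = (2 ^ n)%:R * ((a == d) && (b == c))%:R.
Proof.
elim: n a b c d => [|n IH] a b c d.
  rewrite !(ord_expn0 a, ord_expn0 b, ord_expn0 c, ord_expn0 d) !eqxx mulr1.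
  rewrite (eq_bigr (fun _ => 1)) => [|t _]; last by rewrite /pauli /= !mxE mulr1.
  by rewrite sumr_const card_tuple card_ord.
have [a1 [a2 ->]] := ord_expS_tensP a; have [b1 [b2 ->]] := ord_expS_tensP b.
have [c1 [c2 ->]] := ord_expS_tensP c; have [d1 [d2 ->]] := ord_expS_tensP d.
rewrite big_tuple_cons.
under eq_bigr => x _ do under eq_bigr => t _ do rewrite !pauli_consE mulrACA.
rewrite -big_distrlr /= sigma_complete IH !eq_cast_mxtens_index expnS natrM.
by rewrite mulrACA; congr (_ * _); rewrite -natrM mulnb andbACA.
Qed.

Lemma pauli_adj n (t : n.-tuple 'I_4) : adjmx (pauli C t) = pauli C t.
Proof.
apply/matrixP => a b; rewrite adjmxE.
elim: n t a b => [|n IH] t a b.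
  by rewrite (ord_expn0 a) (ord_expn0 b) /pauli /= !mxE rmorph1.
case/tupleP: t => x t.
have [a1 [a2 ->]] := ord_expS_tensP a; have [b1 [b2 ->]] := ord_expS_tensP b.
by rewrite !pauli_consE rmorphM; congr (_ * _); [exact: sigma_adj | exact: IH].
Qed.

Lemma pauli_expansionE n (F : 'M[C]_(2 ^ n)) b b' :
  \sum_(t : n.-tuple 'I_4) \tr (pauli C t *m F) * pauli C t b b' = (2 ^ n)%:R * F b b'.
Proof.
transitivity (\sum_c \sum_l F l c * \sum_t pauli C t c l * pauli C t b b').
  under eq_bigr => t _ do rewrite mulr_suml.
  rewrite exchange_big; apply: eq_bigr => c _.
  under eq_bigr => t _ do rewrite mxE mulr_suml.
  rewrite exchange_big; apply: eq_bigr => l _; rewrite mulr_sumr.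
  by apply: eq_bigr => t _; rewrite mulrAC mulrC.
rewrite (bigD1 b') //= [X in _ + X]big1 ?addr0 => [|c /negbTE ne]; last first.
  by apply: big1 => l _; rewrite pauli_complete ne mulr0 mulr0.
rewrite (bigD1 b) //= [X in _ + X]big1 ?addr0 => [|l /negbTE ne]; last first.
  by rewrite pauli_complete ne andbF mulr0 mulr0.
by rewrite pauli_complete !eqxx mulr1 mulrC.
Qed.

Lemma sum_pauli_ptrace2 m n (A : 'M[C]_(m * 2 ^ n)) b b' :
  \sum_(t : n.-tuple 'I_4) pauli C t b b' *: ptrace2 ((1%:M *t pauli C t) *m A) =
  (2 ^ n)%:R *: tens_block (mxswap A) b b'.
Proof.
apply/matrixP => x y; rewrite summxE [RHS]mxE tens_block_mxswap.
have -> : A (mxtens_index (x, b)) (mxtens_index (y, b')) = tens_block A x y b b'.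
  by rewrite mxE.
rewrite -pauli_expansionE; apply: eq_bigr => t _.
by rewrite mxE ptrace2E tens_block_tens1_mul mulrC.
Qed.

End Pauli.

Section Measurement.
Variables (C : numClosedFieldType) (d : nat).
Implicit Types S X : 'M[C]_d.

Lemma proj_out_adj b S : adjmx S = S -> adjmx (proj_out b S) = proj_out b S.
Proof.
move=> hS; rewrite /proj_out adjmxZ adjmxD adjmxZ hS adjmx1.
by rewrite rmorphXn rmorphN1 fmorphV rmorph_nat.
Qed.

Lemma psd_proj_out_congr b S X : adjmx S = S -> psd X ->
  psd (proj_out b S *m X *m proj_out b S).
Proof. by move=> hS /(psd_congr (proj_out b S)); rewrite proj_out_adj. Qed.

Lemma sum_sign_proj_out S : \sum_(b : bool) (-1) ^+ b *: proj_out b S = S.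
Proof.
rewrite big_bool /proj_out /= expr1 expr0 !scale1r !scaleN1r addrC -scalerBr.
rewrite (addrC 1%:M) addrKA opprK -mulr2n -scalerMnr scalerMnl -mulr_natr.
by rewrite mulVf ?pnatr_eq0 // scale1r.
Qed.

Lemma proj_out_congrE b S X : proj_out b S *m X *m proj_out b S =
  (2%:R ^+ 2)^-1 *: (X + (-1) ^+ b *: (S *m X + X *m S) + S *m X *m S).
Proof.
rewrite /proj_out -scalemxAr -!scalemxAl scalerA -invfM -expr2.
congr (_ *: _); rewrite mulmxDl mul1mx mulmxDr mulmx1 mulmxDl -!scalemxAr -!scalemxAl.
by rewrite scalerA -expr2 sqrr_sign scale1r scalerDr !addrA.
Qed.

Lemma sum_sign_proj_out_congr S X :
  \sum_(b : bool) (-1) ^+ b *: (proj_out b S *m X *m proj_out b S) =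
  2%:R^-1 *: (S *m X + X *m S).
Proof.
rewrite big_bool !proj_out_congrE /= expr1 expr0 !scale1r !scaleN1r addrC -scalerBr.
rewrite !(addrAC X _ (S *m X *m S)) (addrC (X + _)) addrKA opprK -mulr2n -scaler_nat scalerA.
by congr (_ *: _); field.
Qed.

Lemma two_time_corrE (P : 'M[C]_d -> 'M[C]_d) rho S1 S2 :
  two_time_corr P rho S1 S2 =
  \sum_(a : bool) (-1) ^+ a * \tr (S2 *m P (proj_out a S1 *m rho *m proj_out a S1)).
Proof.
apply: eq_bigr => a _; set Y := P _.
rewrite -[in RHS](sum_sign_proj_out S2) mulmx_suml linear_sum mulr_sumr /=.
by apply: eq_bigr => b _; rewrite -(scalemxAl ((-1) ^+ b)) mxtraceZ mulrA.
Qed.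

End Measurement.

Section NoSignalling.
Variables (C : numClosedFieldType) (nA nB : nat).
Variable P : {linear 'M[C]_(2 ^ nA * 2 ^ nB) -> 'M[C]_(2 ^ nA * 2 ^ nB)}.
Variable T : {linear 'M[C]_(2 ^ nA) -> 'M[C]_(2 ^ nA)}.
Hypothesis no_signalling : forall rho : 'M[C]_(2 ^ nA * 2 ^ nB),
  is_state rho -> ptrace2 (P rho) = T (ptrace2 rho).
Variable rho : 'M[C]_(2 ^ nA * 2 ^ nB).
Hypothesis rho_state : is_state rho.

Lemma no_signalling_psd X : psd X -> ptrace2 (P X) = T (ptrace2 X).
Proof.
exact: (linear_psd_eq (F := @ptrace2 C _ _ \o P) (G := T \o @ptrace2 C _ _) rho_state).
Qed.

Lemma two_time_corr_pauli j k :
  two_time_corr P rho (1%:M *t pauli C j) (pauli C k *t 1%:M) =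
  \tr (pauli C k *m T (ptrace2 ((1%:M *t pauli C j) *m rho))).
Proof.
set S := 1%:M *t pauli C j.
have S_adj : adjmx S = S by rewrite adjmx_tens adjmx1 pauli_adj.
(* stated for an abstract family, so that [linearZ] cannot unfold [proj_out] *)
have pull_sum (X : bool -> 'M[C]_(2 ^ nA * 2 ^ nB)) :
    \sum_(a : bool) (-1) ^+ a * \tr (pauli C k *m T (ptrace2 (X a))) =
    \tr (pauli C k *m T (ptrace2 (\sum_(a : bool) (-1) ^+ a *: X a))).
  by rewrite !linear_sum /=; apply: eq_bigr => a _; rewrite !linearZ.
rewrite two_time_corrE.
under eq_bigr => a _ do
  rewrite mxtrace_tens1_mul (no_signalling_psd (psd_proj_out_congr a S_adj rho_state.1)).
rewrite (pull_sum (fun a => proj_out a S *m rho *m proj_out a S)) sum_sign_proj_out_congr.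
rewrite linearZ linearD /= -ptrace2_tens1_mulC.
by rewrite -mulr2n -scaler_nat scalerA mulVf ?pnatr_eq0 // scale1r.
Qed.

Lemma pdm_B1A2_ampl : pdm_B1A2 P rho = ampl T (mxswap rho).
Proof.
apply/matrixP => I J.
case: (mxtens_indexP I) => b a; case: (mxtens_indexP J) => b' a'; rewrite amplE.
have -> : tens_block (mxswap rho) b b' =
    ((2 ^ nB)%:R)^-1 *: \sum_j pauli C j b b' *: ptrace2 ((1%:M *t pauli C j) *m rho).
  by rewrite sum_pauli_ptrace2 scalerA mulVf ?pnatr_eq0 ?expn_eq0 // scale1r.
rewrite linearZ linear_sum /= mxE summxE /pdm_B1A2 mxE summxE !mulr_sumr.
apply: eq_bigr => j _; rewrite summxE linearZ mxE.
under eq_bigr => k _ do rewrite mxE tensmxE two_time_corr_pauli mulrCA.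
rewrite -mulr_sumr pauli_expansionE !natrX exprD.
by field; rewrite !expf_neq0 ?pnatr_eq0.
Qed.

End NoSignalling.

Theorem theorem3 (C : numClosedFieldType) (nA nB : nat)
  (P : {linear 'M[C]_(2 ^ nA * 2 ^ nB) -> 'M[C]_(2 ^ nA * 2 ^ nB)})
  (T : {linear 'M[C]_(2 ^ nA) -> 'M[C]_(2 ^ nA)}) :
  completely_positive P -> trace_preserving P ->
  completely_positive T ->
  (forall rho : 'M[C]_(2 ^ nA * 2 ^ nB),
      is_state rho -> ptrace2 (P rho) = T (ptrace2 rho)) ->
  forall rho : 'M[C]_(2 ^ nA * 2 ^ nB), is_state rho ->
    psd (pdm_B1A2 P rho) /\ pdm_negativity (pdm_B1A2 P rho) = 0.
Proof.
move=> _ P_tp T_cp no_signalling rho rho_state.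
have R_ampl := pdm_B1A2_ampl no_signalling rho_state.
have R_psd : psd (pdm_B1A2 P rho).
  by rewrite R_ampl; apply: T_cp; exact: psd_mxswap rho_state.1.
split=> //; rewrite /pdm_negativity trnorm_psd // R_ampl mxtrace_ampl.
by rewrite sum_tens_block_mxswap -no_signalling // mxtrace_ptrace2 P_tp rho_state.2 subrr.
Qed.
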